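(* Let $\lambda_1>\lambda_2>\dots>\lambda_n$ be integers (a regular dominant integral weight $\lambda$). An integer point $A$ of the Gelfand–Tsetlin polytope $GT_\lambda$ is a vertex of $GT_\lambda$ if and only if for every $1\le i\le n-1$ and $1\le j\le n-i$ the entry $A_{i,j}$ is equal to at least one of $A_{i-1,j}$ and $A_{i-1,j+1}$.
   Context: $GT_\lambda$ is the polytope in $\mathbb R^{n(n+1)/2}$, with coordinates $A_{i,j}$ for $0\le i\le n-1$, $1\le j\le n-i$, defined by $A_{0,j}=\lambda_j$ for all $j$ and $A_{i,j}\ge A_{i+1,j}\ge A_{i,j+1}$ for all $0\le i\le n-2$, $1\le j\le n-i-1$. *)

From HB Require Import structures.
From mathcomp Require Import all_boot all_order all_algebra.
From mathcomp Require Import reals.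
Set Implicit Arguments. Unset Strict Implicit. Unset Printing Implicit Defensive.
Import Order.TTheory GRing.Theory Num.Theory.
Local Open Scope ring_scope.

(* A point of R^{n(n+1)/2} is represented by A : nat -> nat -> R; only the
   coordinates A i j with 0 <= i <= n-1, 1 <= j <= n-i are meaningful. *)
Definition GTidx (n i j : nat) : bool := [&& (i < n)%N, (1 <= j)%N & (j <= n - i)%N].

Definition inGT (R : realType) (n : nat) (lam : nat -> R) (A : nat -> nat -> R) : Prop :=
  (forall j, (1 <= j)%N -> (j <= n)%N -> A 0%N j = lam j) /\
  (forall i j, (i.+2 <= n)%N -> (1 <= j)%N -> (j <= n - i - 1)%N ->
     A (i.+1) j <= A i j /\ A i j.+1 <= A (i.+1) j).

Definition isGTVertex (R : realType) (n : nat) (lam : nat -> R) (A : nat -> nat -> R) : Prop :=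
  inGT n lam A /\
  forall (B C : nat -> nat -> R) (t : R),
    inGT n lam B -> inGT n lam C -> 0 < t < 1 ->
    (forall i j, GTidx n i j -> A i j = t * B i j + (1 - t) * C i j) ->
    forall i j, GTidx n i j -> B i j = C i j.

From HB Require Import structures.
From mathcomp Require Import all_boot all_order all_algebra.
From mathcomp Require Import reals.
From mathcomp Require Import zify ring lra.
Set Implicit Arguments. Unset Strict Implicit. Unset Printing Implicit Defensive.
Import Order.TTheory GRing.Theory Num.Theory.
Local Open Scope ring_scope.

(* If every entry equals one of its two parents, then writing A = t B + (1 - t) C
   inside GT_lambda forces B = C = A row by row, because an entry equal to its
   upper (resp. lower) bound can only be a convex combination of copies of it.
   Conversely, if A_{k+1,j} lies strictly between its parents, let v be its value
   and shift by +-1/2 every entry equal to v in the rows below row k.  Since all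
   entries are integers and no entry of row k equals v, both shifted arrays still
   interlace, and A is their midpoint. *)

Lemma convex_comb_ub_eq (R : numDomainType) (a b c t : R) :
  0 < t -> t < 1 -> b <= a -> c <= a -> a = t * b + (1 - t) * c -> b = a /\ c = a.
Proof.
move=> t0 t1 ba ca e.
have h1 : 0 <= t * (a - b) by rewrite mulr_ge0 // ?subr_ge0 // ltW.
have h2 : 0 <= (1 - t) * (a - c) by rewrite mulr_ge0 // ?subr_ge0 // ltW.
have h3 : t * (a - b) + (1 - t) * (a - c) = 0.
  by rewrite [X in X - b]e [X in X - c]e; ring.
have /eqP : t * (a - b) = 0 by apply/le_anti; rewrite h1 andbT -h3 lerDl.
rewrite mulf_eq0 gt_eqF //= subr_eq0 => /eqP <-.
have /eqP : (1 - t) * (a - c) = 0 by apply/le_anti; rewrite h2 andbT -h3 lerDr.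
by rewrite mulf_eq0 !subr_eq0 (gt_eqF t1) /= => /eqP <-.
Qed.

Lemma convex_comb_lb_eq (R : numDomainType) (a b c t : R) :
  0 < t -> t < 1 -> a <= b -> a <= c -> a = t * b + (1 - t) * c -> b = a /\ c = a.
Proof.
move=> t0 t1 ab ac e.
have [] := @convex_comb_ub_eq R (- a) (- b) (- c) t t0 t1; rewrite ?lerN2 //.
  by rewrite e; ring.
by move=> /oppr_inj -> /oppr_inj ->.
Qed.

Lemma intr_lt_leD1 (R : numDomainType) (zx zy : int) :
  zx%:~R < zy%:~R :> R -> zx%:~R + 1 <= zy%:~R :> R.
Proof. by rewrite ltr_int -lezD1 -(ler_int R) rmorphD. Qed.

Lemma ler_shift (R : realFieldType) (x y s : R) (bx by_ : bool) :
  x <= y -> -(1/2) <= s <= 1/2 -> (bx != by_ -> x + 1 <= y) ->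
  (if bx then x + s else x) <= (if by_ then y + s else y).
Proof.
move=> lexy /andP[s1 s2].
by case: bx; case: by_ => //= gap; rewrite ?lerD2r //; have := gap isT; lra.
Qed.

Section GelfandTsetlin.

Variables (R : realType) (n : nat) (lam : nat -> R).

Lemma GTidxP i j : reflect [/\ (i < n)%N, (1 <= j)%N & (j <= n - i)%N] (GTidx n i j).
Proof. exact: and3P. Qed.

Lemma inGT_row_antimono A k l l' : inGT n lam A -> (k.+2 <= n)%N ->
  (1 <= l)%N -> (l <= l')%N -> (l' <= n - k)%N -> A k l' <= A k l.
Proof.
move=> [_ HA] hk hl; elim: l' => [|l' IH] hll' hl'; first by lia.
have [lt_ll'|ge_ll'] := ltnP l l'.+1; last by have -> : l = l'.+1 by lia.
have [le_below le_above] := HA k l' hk (ltac:(lia)) (ltac:(lia)).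
exact: le_trans (le_trans le_above le_below) (IH (ltac:(lia)) (ltac:(lia))).
Qed.

Lemma inGT_parent_row_neq A k j m : inGT n lam A -> (k.+2 <= n)%N ->
  (1 <= j)%N -> (j <= n - k - 1)%N ->
  A k.+1 j != A k j -> A k.+1 j != A k j.+1 ->
  (1 <= m)%N -> (m <= n - k)%N -> A k m != A k.+1 j.
Proof.
move=> HA hk hj1 hj2 ne_left ne_right hm1 hm2; apply/eqP=> e.
have [le_left le_right] := HA.2 k j hk hj1 hj2.
have [hmj|hjm] := leqP m j.
- have := inGT_row_antimono HA hk hm1 hmj (ltac:(lia)).
  by move: ne_left; rewrite eq_le le_left /= -e => /negPf ->.
- have := inGT_row_antimono HA hk (ltac:(lia) : (1 <= j.+1)%N) hjm hm2.
  by move: ne_right; rewrite eq_le le_right andbT -e => /negPf ->.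
Qed.

Definition GT_shift (A : nat -> nat -> R) k v s a b :=
  if (k < a)%N && (A a b == v) then A a b + s else A a b.

Lemma GT_shift_midpoint A k v a b :
  A a b = 1/2 * GT_shift A k v (1/2) a b + (1 - 1/2) * GT_shift A k v (-(1/2)) a b.
Proof. by rewrite /GT_shift; case: ifP => _; move: (A a b) => x; lra. Qed.

Lemma inGT_shift A k v s :
  (forall i j, GTidx n i j -> exists z : int, A i j = z%:~R) ->
  inGT n lam A -> (k.+2 <= n)%N ->
  (forall m, (1 <= m)%N -> (m <= n - k)%N -> A k m != v) ->
  -(1/2) <= s <= 1/2 -> inGT n lam (GT_shift A k v s).
Proof.
move=> Hint HA hk row_k_neq hs; split=> [j hj1 hj2|a b ha hb1 hb2].
  by rewrite /GT_shift /= HA.1.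
have flags_neq c c' : (1 <= c)%N -> (c <= n - a)%N ->
    ((k < a) && (A a c == v))%N != ((k < a.+1) && (A a.+1 c' == v))%N ->
    A a c != A a.+1 c'.
  move=> hc1 hc2; have [lt_ka|le_ak] := ltnP k a.
    by rewrite ltnW //=; apply: contra => /eqP ->.
  have [eak|ne_ak] := eqVneq a k; last by have -> : (k < a.+1)%N = false by lia.
  by subst a; rewrite ltnSn /=; case: (A k.+1 c' =P v) => // -> _; apply: row_k_neq.
have int_gap i j i' j' : GTidx n i j -> GTidx n i' j' ->
    A i j != A i' j' -> A i j <= A i' j' -> A i j + 1 <= A i' j'.
  move=> /Hint[z ->] /Hint[z' ->] neq le; apply: intr_lt_leD1.
  by rewrite lt_neqAle neq le.
have idx_ab : GTidx n a b by apply/GTidxP; split; lia.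
have idx_a1b : GTidx n a.+1 b by apply/GTidxP; split; lia.
have idx_ab1 : GTidx n a b.+1 by apply/GTidxP; split; lia.
have [le_below le_above] := HA.2 a b ha hb1 hb2.
rewrite /GT_shift; split; apply: ler_shift => // flags.
- apply: int_gap => //; rewrite eq_sym.
  by apply: flags_neq; [done | lia | rewrite eq_sym].
- by apply: int_gap => //; apply: flags_neq => //; lia.
Qed.

Lemma GT_not_vertex A k j :
  (forall i j, GTidx n i j -> exists z : int, A i j = z%:~R) ->
  inGT n lam A -> (k.+2 <= n)%N -> (1 <= j)%N -> (j <= n - k - 1)%N ->
  A k.+1 j != A k j -> A k.+1 j != A k j.+1 -> ~ isGTVertex n lam A.
Proof.
move=> Hint HA hk hj1 hj2 ne_left ne_right [_ HV].
have row_k_neq := inGT_parent_row_neq HA hk hj1 hj2 ne_left ne_right.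
have shift_in s : -(1/2) <= s <= 1/2 -> inGT n lam (GT_shift A k (A k.+1 j) s).
  exact: inGT_shift.
have half01 : 0 < (1/2 : R) < 1 by apply/andP; split; lra.
have idx_k1j : GTidx n k.+1 j by apply/GTidxP; split; lia.
have := HV _ _ _ (shift_in (1/2) (ltac:(apply/andP; split; lra)))
  (shift_in (-(1/2)) (ltac:(apply/andP; split; lra))) half01
  (fun a b _ => GT_shift_midpoint A k _ a b) k.+1 j idx_k1j.
by rewrite /GT_shift ltnSn eqxx /=; move: (A k.+1 j) => x; lra.
Qed.

Lemma GT_eq_of_parent_eq A B C t :
  (forall i j, (1 <= i)%N -> (i <= n - 1)%N -> (1 <= j)%N -> (j <= n - i)%N ->
     A i j = A i.-1 j \/ A i j = A i.-1 j.+1) ->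
  inGT n lam A -> inGT n lam B -> inGT n lam C -> 0 < t < 1 ->
  (forall i j, GTidx n i j -> A i j = t * B i j + (1 - t) * C i j) ->
  forall i j, GTidx n i j -> B i j = A i j /\ C i j = A i j.
Proof.
move=> Hpar HA HB HC /andP[t0 t1] Hcomb.
elim=> [|k IH] j /GTidxP[hi hj1 hj2]; first by rewrite HB.1 ?HC.1 ?HA.1 //; lia.
have [b_below b_above] := HB.2 k j (ltac:(lia)) hj1 (ltac:(lia)).
have [c_below c_above] := HC.2 k j (ltac:(lia)) hj1 (ltac:(lia)).
have comb := Hcomb k.+1 j (ltac:(apply/GTidxP; split; lia)).
have [/= e|/= e] := Hpar k.+1 j (ltac:(lia)) (ltac:(lia)) hj1 hj2.
- have [eB eC] := IH j (ltac:(apply/GTidxP; split; lia)).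
  rewrite e; apply: convex_comb_ub_eq t0 t1 _ _ (etrans (esym e) comb).
  + by rewrite -eB.
  + by rewrite -eC.
- have [eB eC] := IH j.+1 (ltac:(apply/GTidxP; split; lia)).
  rewrite e; apply: convex_comb_lb_eq t0 t1 _ _ (etrans (esym e) comb).
  + by rewrite -eB.
  + by rewrite -eC.
Qed.

End GelfandTsetlin.

Theorem mainTheorem3 (R : realType) (n : nat) (lam : nat -> int)
  (Hlam : forall j, (1 <= j)%N -> (j < n)%N -> lam j.+1 < lam j)
  (A : nat -> nat -> R)
  (Hint : forall i j, GTidx n i j -> exists z : int, A i j = z%:~R)
  (HA : inGT n (fun j => (lam j)%:~R) A) :
  isGTVertex n (fun j => (lam j)%:~R) A <->
  (forall i j, (1 <= i)%N -> (i <= n - 1)%N -> (1 <= j)%N -> (j <= n - i)%N ->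
     A i j = A i.-1 j \/ A i j = A i.-1 j.+1).
Proof.
split=> [Hvert [|k] j hi1 hin hj1 hjn //=|Hpar].
  have [->|ne_left] := eqVneq (A k.+1 j) (A k j); first by left.
  have [->|ne_right] := eqVneq (A k.+1 j) (A k j.+1); first by right.
  have hk : (k.+2 <= n)%N by lia.
  have hj : (j <= n - k - 1)%N by lia.
  by exfalso; apply: (GT_not_vertex Hint HA hk hj1 hj ne_left ne_right).
split=> // B C t HB HC t01 Hcomb i j hij.
by have [-> ->] := GT_eq_of_parent_eq Hpar HA HB HC t01 Hcomb hij.
Qed.
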